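(* Let $k,\ell \in \mathbb{N}$, and let $G$ be any ordered graph. If $G$ contains no $k$-structure of Type 1, no $k$-structure of Type 2, and no $(k,\ell)$-structure of Type 3, then the vertices of $G$ may be partitioned into blocks $B_1 < \ldots < B_m$ of consecutive vertices, with $m \leqslant 256k^4$ and each block $\ell$-homogeneous.
   Context: An ordered graph of order $n$ has vertex set $[n]$ with the natural order; $\Gamma(x)$ is the neighbourhood of $x$. For sets $A,B$ of vertices, $A<B$ means $a<b$ for all $a\in A$, $b\in B$. For a vertex $x$ and $\ell\in\mathbb{N}$, $N_\ell(x)=\{z\in\mathbb{N}: x-\ell+1\leqslant z\leqslant x+\ell-1\}$. Vertices $x,y$ are $\ell$-homogeneous if $\Gamma(x)\setminus(N_\ell(x)\cup N_\ell(y))=\Gamma(y)\setminus(N_\ell(x)\cup N_\ell(y))$; a set $B$ of consecutive vertices is $\ell$-homogeneous if every two of its vertices are $\ell$-homogeneous. Structures in $G$: a $k$-structure of Type 1 consists of vertices $y$ and $x_1<\dots<x_{2k}$ with $y<x_1$ or $y>x_{2k}$, such that for $1\leqslant i<2k$, $yx_i\in E(G)$ iff $yx_{i+1}\notin E(G)$. A $k$-structure of Type 2(a) consists of vertices $x_1<\dots<x_{2k}<y_1<\dots<y_{2k}$ such that for $1\leqslant i<2k$, $x_iy_i\in E(G)$ iff $x_{i+1}y_{i+1}\notin E(G)$; Type 2(b) is the same but with $x_1<\dots<x_{2k}<y_{2k}<\dots<y_1$; a $k$-structure of Type 2 is one of Type 2(a) or 2(b). A $(k,\ell)$-structure of Type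 3 consists of vertices $x_1<z_{1,1}<\dots<z_{1,\ell-1}<y_1<x_2<z_{2,1}<\dots<z_{2,\ell-1}<y_2<x_3<\dots<y_{2k-1}<x_{2k}<z_{2k,1}<\dots<z_{2k,\ell-1}<y_{2k}$ such that for $1\leqslant i<2k$, $x_iy_i\in E(G)$ iff $x_{i+1}y_{i+1}\notin E(G)$. *)

From mathcomp Require Import all_boot.
Set Implicit Arguments. Unset Strict Implicit. Unset Printing Implicit Defensive.

(* An ordered graph of order n: vertex set [n] = {1,...,n} (as nats) with the
   natural order, and a symmetric irreflexive adjacency relation [adj]
   (values of [adj] outside [n] are irrelevant). *)
Definition is_vertex (n v : nat) : bool := (1 <= v) && (v <= n).

Definition simple_graph (adj : rel nat) : Prop :=
  (forall u v, adj u v = adj v u) /\ (forall v, adj v v = false).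

(* z \in N_l(x)  <->  x - l + 1 <= z <= x + l - 1  (over the integers) *)
Definition in_Nl (l x z : nat) : bool := (z - x < l) && (x - z < l).

Definition homog (n : nat) (adj : rel nat) (l x y : nat) : Prop :=
  forall z, is_vertex n z -> ~~ in_Nl l x z -> ~~ in_Nl l y z ->
    adj x z = adj y z.

Definition incr_verts (n len : nat) (x : nat -> nat) : Prop :=
  (forall i, i < len -> is_vertex n (x i)) /\
  (forall i, i.+1 < len -> x i < x i.+1).

(* k-structure of Type 1 (indices shifted: x_1..x_{2k} are x 0 .. x (2k-1)) *)
Definition type1 (n : nat) (adj : rel nat) (k : nat) : Prop :=
  exists (y : nat) (x : nat -> nat),
    is_vertex n y /\ incr_verts n (2 * k) x /\
    (y < x 0 \/ y > x (2 * k).-1) /\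
    (forall i, i.+1 < 2 * k -> adj y (x i) = ~~ adj y (x i.+1)).

Definition type2a (n : nat) (adj : rel nat) (k : nat) : Prop :=
  exists x y : nat -> nat,
    incr_verts n (2 * k) x /\ incr_verts n (2 * k) y /\
    x (2 * k).-1 < y 0 /\
    (forall i, i.+1 < 2 * k -> adj (x i) (y i) = ~~ adj (x i.+1) (y i.+1)).

Definition type2b (n : nat) (adj : rel nat) (k : nat) : Prop :=
  exists x y : nat -> nat,
    incr_verts n (2 * k) x /\
    (forall i, i < 2 * k -> is_vertex n (y i)) /\
    (forall i, i.+1 < 2 * k -> y i.+1 < y i) /\
    x (2 * k).-1 < y (2 * k).-1 /\
    (forall i, i.+1 < 2 * k -> adj (x i) (y i) = ~~ adj (x i.+1) (y i.+1)).

Definition type2 (n : nat) (adj : rel nat) (k : nat) : Prop :=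
  type2a n adj k \/ type2b n adj k.

(* (k,l)-structure of Type 3:
   x_1 < z_{1,1} < ... < z_{1,l-1} < y_1 < x_2 < ... < x_{2k} < z_{2k,1} < ... < z_{2k,l-1} < y_{2k}
   (indices shifted to start at 0). *)
Definition type3 (n : nat) (adj : rel nat) (k l : nat) : Prop :=
  exists (x y : nat -> nat) (z : nat -> nat -> nat),
    (forall i, i < 2 * k -> is_vertex n (x i) /\ is_vertex n (y i) /\ x i < y i) /\
    (forall i, i.+1 < 2 * k -> y i < x i.+1) /\
    (forall i j, i < 2 * k -> j < l.-1 ->
        is_vertex n (z i j) /\ x i < z i j /\ z i j < y i) /\
    (forall i j, i < 2 * k -> j.+1 < l.-1 -> z i j < z i j.+1) /\
    (forall i, i.+1 < 2 * k -> adj (x i) (y i) = ~~ adj (x i.+1) (y i.+1)).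

(* A partition of [n] into m blocks B_1 < ... < B_m of consecutive vertices,
   given by cut points 1 = b 0 < b 1 < ... < b m = n+1, B_{j+1} = [b j, b (j+1)),
   each block being l-homogeneous. *)
Definition homog_block_partition (n : nat) (adj : rel nat) (l m : nat)
    (b : nat -> nat) : Prop :=
  b 0 = 1 /\ b m = n.+1 /\
  (forall j, j < m -> b j < b j.+1) /\
  (forall j, j < m -> forall x y, b j <= x < b j.+1 -> b j <= y < b j.+1 ->
      homog n adj l x y).

(* Call c (1 < c <= n) a cut if c-1 and c are told apart by a vertex at distance
   at least l to the right of c or to the left of c-1 (a right or left break at
   c-1), or if c is a multiple of l in (z-l, z+l] for a special vertex z, one
   adjacent to exactly one of z-l and z+l.  Between consecutive cuts all vertices
   are l-homogeneous: a vertex z far from x <= y sees x and y alike if it lies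
   outside [x, y]; if it lies inside, it sees x like z-l and y like z+l, and a
   special z is excluded by the cut at the multiple of l in (z, z+l].

   Every cut has a witness vertex, and choosing the endpoint of a break among
   c-1, c (or the endpoint of a special cut among z-l, z+l) by a prescribed
   adjacency bit turns cuts into pairs with alternating adjacency.  Every fourth
   special cut gives disjoint consecutive pairs, i.e. a Type 3 structure.  Breaks
   of one side and one parity are ordered by position, with p -> q when the
   witness of p reaches no further than q+1.  Every other step of a long ->-chain
   gives a Type 3 structure, and a long ->-free sequence whose witnesses increase,
   decrease or are constant gives a Type 2(a), 2(b) or 1 structure.  Labelling
   each break by its ->-height and, inside its height level, by the longest
   increasing, decreasing and constant witness runs ending at it is injective
   (Mirsky), so there are at most 2M * M^3 such breaks, where M = 2k-1. *)

From mathcomp Require Import all_boot zify.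
Set Implicit Arguments. Unset Strict Implicit. Unset Printing Implicit Defensive.
Set Bullet Behavior "Strict Subproofs".

Section Height.
Variable r : rel nat.

(* height i is the length of the longest r-chain of increasing indices ending at i;
   it is computed through the list of all earlier heights. *)
Fixpoint heights (m : nat) : seq nat :=
  if m is m'.+1 then
    rcons (heights m') (\max_(j < m' | r j m') nth 0 (heights m') j).+1
  else [::].

Definition height i := nth 0 (heights i.+1) i.

Lemma size_heights m : size (heights m) = m.
Proof. by elim: m => //= m IH; rewrite size_rcons IH. Qed.

Lemma nth_heights m j : j < m -> nth 0 (heights m) j = height j.
Proof.
elim: m => // m IH; rewrite ltnS leq_eqVlt => /orP[/eqP -> // | ltjm].
by rewrite /= nth_rcons size_heights ltjm IH.
Qed.

Lemma heightE i : height i = (\max_(j < i | r j i) height j).+1.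
Proof.
rewrite /height /= nth_rcons size_heights ltnn eqxx; congr _.+1.
by apply: eq_bigr => j _; rewrite nth_heights.
Qed.

Lemma height_gt0 i : 0 < height i.
Proof. by rewrite heightE. Qed.

Lemma height_lt j i : j < i -> r j i -> height j < height i.
Proof.
move=> lt_ji rji; rewrite (heightE i) ltnS.
exact: (leq_bigmax_cond (Ordinal lt_ji) (P := fun j : 'I_i => r j i)).
Qed.

Lemma height_chain m i : m < height i -> exists f : nat -> nat,
  f m = i /\ forall t, t < m -> f t < f t.+1 /\ r (f t) (f t.+1).
Proof.
elim: m i => [|m IH] i; first by exists (fun=> i).
rewrite heightE ltnS.
have [c0|] := posnP #|(fun j : 'I_i => r j i)|.
  by rewrite big_pred0 // => j; have := card0_eq c0 j.
move=> /(eq_bigmax_cond (fun j : 'I_i => height j)) [j rji ->] /IH [f [fm Hf]].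
exists (fun t => if t == m.+1 then i else f t); split=> [|t ltm]; first by rewrite eqxx.
rewrite (ltn_eqF ltm) eqSS; case: eqVneq => [-> | ne]; first by rewrite fm.
by apply: Hf; lia.
Qed.

End Height.

Lemma eq_steps (T : Type) (g : nat -> T) a b :
  (forall p, a <= p < b -> g p = g p.+1) -> a <= b -> g a = g b.
Proof.
elim: b => [|b IH] step le_ab; first by move: le_ab; rewrite leqn0 => /eqP ->.
have [-> // | ne] := eqVneq a b.+1.
rewrite IH => [|p p_ab|]; [apply: step | apply: step |]; lia.
Qed.

Lemma odd_gap p q : odd p = odd q -> p < q -> p.+2 <= q.
Proof.
move=> opq; rewrite leq_eqVlt => /orP[/eqP qE | //].
by move: opq; rewrite -qE /=; case: odd.
Qed.

Lemma filter_iota_gap (P : pred nat) a m j c :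
  j.+1 < size (filter P (iota a m)) ->
  nth 0 (filter P (iota a m)) j < c < nth 0 (filter P (iota a m)) j.+1 -> ~~ P c.
Proof.
set s := filter P (iota a m) => js /andP[jc cj]; apply/negP => Pc.
have s_sorted : sorted leq s.
  by apply: sorted_filter; [apply: leq_trans | apply: (sub_sorted ltnW (iota_ltn_sorted a m))].
have nth_le i i' : i <= i' < size s -> nth 0 s i <= nth 0 s i'.
  move=> /andP[ii' i's]; apply: (sorted_leq_nth leq_trans leqnn) => //.
  by rewrite inE (leq_ltn_trans ii').
have in_iota i : i < size s -> a <= nth 0 s i < a + m.
  by move=> /(mem_nth 0); rewrite mem_filter mem_iota => /andP[].
have : c \in s.
  by rewrite mem_filter Pc mem_iota; have := in_iota _ js; have := in_iota _ (ltnW js); lia.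
(* nthP bounds i by the size of s seen as a seq over the eqType carrier; lia needs
   it over nat. *)
case/(nthP 0) => i i_s c_i; have {}i_s : i < size s := i_s.
have [ij | ji] := leqP i j.
  by have := leq_ltn_trans (nth_le i j (ltac:(lia))) jc; rewrite c_i ltnn.
by have := leq_trans cj (nth_le j.+1 i (ltac:(lia))); rewrite c_i ltnn.
Qed.

Lemma count_le_predU (T : Type) (a a1 a2 : pred T) s :
  subpred a (predU a1 a2) -> count a s <= count a1 s + count a2 s.
Proof. by move=> sub; rewrite -count_predUI (leq_trans (sub_count sub s)) ?leq_addr. Qed.

Definition monotone_upto (g : nat -> nat) (M : nat) :=
  [\/ forall t, t < M -> g t < g t.+1,
      forall t, t < M -> g t > g t.+1
    | forall t, t < M -> g t = g t.+1].

Section MonotonePatterns.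
Variables (s : seq nat) (M : nat) (D : rel nat) (c : nat -> nat).
Hypothesis s_uniq : uniq s.
Hypothesis no_long_D_chain : forall f : nat -> nat,
  (forall t, t <= M.*2 -> f t \in s) ->
  ~ (forall t, t < M.*2 -> f t < f t.+1 /\ D (f t) (f t.+1)).
Hypothesis no_monotone_D_free : forall f : nat -> nat,
  (forall t, t <= M -> f t \in s) -> (forall t, t < M -> f t < f t.+1) ->
  (forall t u, t < u <= M -> ~~ D (f t) (f u)) ->
  ~ monotone_upto (c \o f) M.

Let D_in j i := [&& j \in s, i \in s & D j i].
Let hD := height D_in.

Definition monotone_rel (cmp : rel nat) :=
  forall g : nat -> nat, (forall t, t < M -> cmp (g t) (g t.+1)) -> monotone_upto g M.

Definition level_rel (cmp : rel nat) j i :=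
  [&& j \in s, i \in s, hD j == hD i & cmp (c j) (c i)].

Lemma D_height_le i : i \in s -> hD i <= M.*2.
Proof.
move=> si; rewrite leqNgt; apply/negP => /height_chain [f [fM Hf]].
apply: (no_long_D_chain (f := f)) => [t | t /Hf [? /and3P[]] //].
by rewrite leq_eqVlt => /orP[/eqP -> | /Hf [_ /and3P[]]]; rewrite ?fM.
Qed.

Lemma level_height_le (cmp : rel nat) i :
  monotone_rel cmp -> i \in s -> height (level_rel cmp) i <= M.
Proof.
move=> monotone si; rewrite leqNgt; apply/negP => /height_chain [f [fM Hf]].
have f_s t : t <= M -> f t \in s.
  by rewrite leq_eqVlt => /orP[/eqP -> | /Hf [_ /and4P[]]]; rewrite ?fM.
have f_lt : {in [pred t | t <= M] &, {homo f : t u / t < u}}.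
  apply: (homo_ltn_in ltn_trans) => [t u /= tM uM v /andP[_ /ltnW vu] | t /= _ tM].
    exact: leq_trans vu uM.
  by case: (Hf t tM).
have f_level t : t <= M -> hD (f t) = hD (f 0).
  move=> tM; symmetry; apply: (eq_steps (g := hD \o f)) => // u /andP[_ uM].
  by case: (Hf u (leq_trans uM tM)) => _ /and4P[_ _ /eqP].
apply: (no_monotone_D_free f_s) => [t /Hf [] // | t u /andP[tu uM] | ].
  have tM : t <= M := ltnW (leq_trans tu uM).
  apply/negP => Dtu; have /(@height_lt D_in) : f t < f u by apply: f_lt.
  rewrite /D_in Dtu !f_s // -/hD (f_level t) // (f_level u) // ltnn.
  by move/(_ isT).
by apply: monotone => t /Hf [_ /and4P[]].
Qed.

Definition label i :=
  (hD i, (height (level_rel ltn) i, (height (level_rel gtn) i,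
     height (level_rel eqn) i))).

Lemma label_neq j i : j < i -> j \in s -> i \in s -> label j != label i.
Proof.
move=> ji sj si.
have neq_at (T : eqType) (proj : nat * (nat * (nat * nat)) -> T) :
    proj (label j) != proj (label i) -> label j != label i.
  by apply: contraNN => /eqP ->.
case Dji: (D j i).
  apply: (neq_at _ fst); apply/negbT/ltn_eqF/height_lt => //.
  by rewrite /D_in sj si Dji.
have [hE | hne] := eqVneq (hD j) (hD i); last exact: (neq_at _ fst).
have level_neq (cmp : rel nat) :
    cmp (c j) (c i) -> height (level_rel cmp) j != height (level_rel cmp) i.
  by move=> cji; apply/negbT/ltn_eqF/height_lt => //; rewrite /level_rel sj si hE eqxx.
case: (ltngtP (c j) (c i)) => [cji | cji | /eqP cji].
- exact: (neq_at _ (fun x => x.2.1) (level_neq ltn cji)).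
- exact: (neq_at _ (fun x => x.2.2.1) (level_neq gtn cji)).
- exact: (neq_at _ (fun x => x.2.2.2) (level_neq eqn cji)).
Qed.

Lemma size_pattern_free : size s <= M.*2 * M ^ 3.
Proof.
have label_uniq : uniq (map label s).
  rewrite map_inj_in_uniq // => i j si sj eq_ij.
  case: (ltngtP i j) => // lt; [move: (label_neq lt si sj) | move: (label_neq lt sj si)];
  by rewrite eq_ij eqxx.
set range := iota 1 M.
set labels := [seq (a, b) | a <- iota 1 M.*2, b <-
  [seq (x, y) | x <- range, y <- [seq (u, v) | u <- range, v <- range]]].
have -> : M.*2 * M ^ 3 = size labels by rewrite !size_allpairs !size_iota; lia.
rewrite -(size_map label); apply: uniq_leq_size => // _ /mapP[i si ->].
have level_in (cmp : rel nat) : monotone_rel cmp -> height (level_rel cmp) i \in range.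
  by move=> mono; rewrite mem_iota height_gt0 add1n ltnS level_height_le.
apply: allpairs_f; first by rewrite mem_iota height_gt0 add1n ltnS D_height_le.
apply: allpairs_f; first by apply: level_in => g; apply: Or31.
apply: allpairs_f; first by apply: level_in => g; apply: Or32.
by apply: level_in => g mono; apply: Or33 => t /mono /eqnP.
Qed.

End MonotonePatterns.

Section Breaks.
Variables (n l : nat) (adj : rel nat).
Hypothesis adj_sym : forall u v, adj u v = adj v u.
Hypothesis l_gt0 : 0 < l.

Lemma has_vertexP (P : pred nat) :
  reflect (exists2 z, is_vertex n z & P z) (has P (iota 1 n)).
Proof.
by apply: (iffP hasP) => -[z zv Pz]; exists z; move: zv; rewrite ?mem_iota /is_vertex; lia.
Qed.

Definition vertex_witness (P : pred nat) := nth 0 (iota 1 n) (find P (iota 1 n)).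

Lemma vertex_witnessP (P : pred nat) :
  has P (iota 1 n) -> is_vertex n (vertex_witness P) /\ P (vertex_witness P).
Proof.
move=> hasP; split; last exact: nth_find.
have : find P (iota 1 n) < size (iota 1 n) by rewrite -has_find.
by move/(mem_nth 0); rewrite mem_iota add1n ltnS.
Qed.

Definition right_sep p z := (p.+1 + l <= z) && (adj z p != adj z p.+1).
Definition left_sep p z := (z + l <= p) && (adj z p != adj z p.+1).
Definition right_break p := [&& 0 < p, p < n & has (right_sep p) (iota 1 n)].
Definition left_break p := [&& 0 < p, p < n & has (left_sep p) (iota 1 n)].

Definition special z := [&& l < z, z + l <= n & adj z (z - l) != adj z (z + l)].
Definition special_near c z := special z && (z - l < c <= z + l).
Definition special_break c := (l %| c) && has (special_near c) (iota 1 n).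

Definition cut c :=
  [&& 1 < c, c <= n & [|| right_break c.-1, left_break c.-1 | special_break c]].

Lemma adj_step_of_no_cut p z : 0 < p < n -> ~~ cut p.+1 -> is_vertex n z ->
  p.+1 + l <= z \/ z + l <= p -> adj z p = adj z p.+1.
Proof.
move=> /andP[p_gt0 p_lt] no_cut zv far; apply/eqP; apply: contraNT no_cut => sep.
rewrite /cut /right_break /left_break /= ltnS p_gt0 p_lt /=.
apply/or3P; case: far => far; [apply: Or31 | apply: Or32];
  by apply/has_vertexP; exists z; rewrite // /right_sep /left_sep far.
Qed.

Lemma far_of_not_in_Nl x z : ~~ in_Nl l x z -> (x + l <= z) || (z + l <= x).
Proof. by rewrite /in_Nl; lia. Qed.

Lemma homog_of_no_cut x y : 0 < x -> x <= y -> y <= n ->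
  (forall c, x < c <= y -> ~~ cut c) -> homog n adj l x y.
Proof.
move=> x_gt0 xy yn no_cut z zv /far_of_not_in_Nl far_x /far_of_not_in_Nl far_y.
have step p : x <= p < y -> p.+1 + l <= z \/ z + l <= p -> adj z p = adj z p.+1.
  by move=> ? ?; apply: adj_step_of_no_cut => //; [lia | apply: no_cut; lia].
rewrite !(adj_sym _ z).
have [right_of_y | not_right] := boolP (y + l <= z).
  by apply: (eq_steps (g := adj z)) => // p xpy; apply: step; lia.
have [left_of_x | not_left] := boolP (z + l <= x).
  by apply: (eq_steps (g := adj z)) => // p xpy; apply: step; lia.
move: far_x far_y; rewrite (negPf not_right) (negPf not_left) orbF => x_z z_y.
have -> : adj z x = adj z (z - l).
  by apply: (eq_steps (g := adj z)) => [p xpz|]; [apply: step | ]; lia.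
have <- : adj z (z + l) = adj z y.
  by apply: (eq_steps (g := adj z)) => [p zpy|]; [apply: step | ]; lia.
apply/eqP/negPn/negP => z_special.
pose c := (z %/ l).+1 * l.
have z_c : z < c by apply: ltn_ceil.
have c_z : c <= z + l by rewrite /c mulSn addnC leq_add2r leq_divM.
have /negP := no_cut c (ltac:(lia)); apply.
rewrite /cut; apply/and3P; split; [lia | lia | apply/or3P; apply: Or33].
rewrite /special_break dvdn_mull //=; apply/has_vertexP; exists z => //.
by rewrite /special_near /special z_special andbT; lia.
Qed.

End Breaks.

Section Structures.
Variables (k l n : nat) (adj : rel nat).

Lemma alternating_of_odd (x y : nat -> nat) N :
  (forall t, t < N -> adj (x t) (y t) = odd t) ->
  forall t, t.+1 < N -> adj (x t) (y t) = ~~ adj (x t.+1) (y t.+1).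
Proof. by move=> alt t tN; rewrite !alt ?negbK // ltnW. Qed.

Lemma type3_of_pairs (a b : nat -> nat) : 0 < l ->
  (forall t, t < 2 * k ->
     [/\ is_vertex n (a t), b t <= n, a t + l <= b t & adj (a t) (b t) = odd t]) ->
  (forall t, t.+1 < 2 * k -> b t < a t.+1) -> type3 n adj k l.
Proof.
move=> l_gt0 pair b_a; exists a, b, (fun t j => a t + j.+1).
split; [|split; [exact: b_a|split; [|split]]].
- by move=> t /pair[]; rewrite /is_vertex; lia.
- by move=> t j /pair[]; rewrite /is_vertex; lia.
- by move=> t j _ _; rewrite ltn_add2l.
- by apply: alternating_of_odd => t /pair[].
Qed.

Lemma type2_of_crossing_pairs (a b : nat -> nat) :
  (forall t, t < 2 * k -> [/\ is_vertex n (a t), is_vertex n (b t) & adj (a t) (b t) = odd t]) ->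
  (forall t, t.+1 < 2 * k -> a t < a t.+1 /\ b t < b t.+1) ->
  a (2 * k).-1 < b 0 -> type2 n adj k.
Proof.
move=> pair incr a_b; left; exists a, b; split; [|split; [|split => //]].
- by split=> [t /pair[] | t /incr[]].
- by split=> [t /pair[] | t /incr[]].
- by apply: alternating_of_odd => t /pair[].
Qed.

Lemma type2_of_nested_pairs (a b : nat -> nat) :
  (forall t, t < 2 * k -> [/\ is_vertex n (a t), is_vertex n (b t) & adj (a t) (b t) = odd t]) ->
  (forall t, t.+1 < 2 * k -> a t < a t.+1 /\ b t.+1 < b t) ->
  a (2 * k).-1 < b (2 * k).-1 -> type2 n adj k.
Proof.
move=> pair incr a_b; right; exists a, b; split; [|split; [|split; [|split => //]]].
- by split=> [t /pair[] | t /incr[]].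
- by move=> t /pair[].
- by move=> t /incr[].
- by apply: alternating_of_odd => t /pair[].
Qed.

Lemma type1_of_star (y : nat) (x : nat -> nat) : is_vertex n y ->
  (forall t, t < 2 * k -> is_vertex n (x t) /\ adj y (x t) = odd t) ->
  (forall t, t.+1 < 2 * k -> x t < x t.+1) ->
  y < x 0 \/ y > x (2 * k).-1 -> type1 n adj k.
Proof.
move=> yv star incr y_side; exists y, x; split; [done | split; [|split => //]].
- by split=> [t /star[] | ].
- by apply: (alternating_of_odd (x := fun=> y)) => t /star[].
Qed.

End Structures.

Section Witnesses.
Variables (n l : nat) (adj : rel nat).
Hypothesis adj_sym : forall u v, adj u v = adj v u.

Definition pick_end z p (b : bool) := if adj z p == b then p else p.+1.

Lemma pick_end_spec z p b : adj z p != adj z p.+1 ->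
  p <= pick_end z p b <= p.+1 /\ adj (pick_end z p b) z = b.
Proof.
move=> sep; rewrite /pick_end (adj_sym _ z).
have [<- | ne] := eqVneq (adj z p) b; rewrite leqnn leqnSn; split => //.
by move: sep ne; case: (adj z p) (adj z p.+1) b => -[] [].
Qed.

Definition right_witness p := vertex_witness n (right_sep l adj p).
Definition right_end p b := pick_end (right_witness p) p b.
Definition left_witness p := vertex_witness n (left_sep l adj p).
Definition left_end p b := pick_end (left_witness p) p b.

Lemma right_breakP p b : right_break n l adj p ->
  [/\ is_vertex n (right_end p b), is_vertex n (right_witness p), p <= right_end p b <= p.+1,
      right_end p b + l <= right_witness p & adj (right_end p b) (right_witness p) = b].
Proof.
case/and3P=> p_gt0 p_lt /vertex_witnessP[zv /andP[far sep]].
have [bounds adj_b] := pick_end_spec b sep.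
by rewrite /right_end /right_witness; move: zv; rewrite /is_vertex => zv; split => //; lia.
Qed.

Lemma left_breakP p b : left_break n l adj p ->
  [/\ is_vertex n (left_witness p), is_vertex n (left_end p b), p <= left_end p b <= p.+1,
      left_witness p + l <= left_end p b & adj (left_witness p) (left_end p b) = b].
Proof.
case/and3P=> p_gt0 p_lt /vertex_witnessP[zv /andP[far sep]].
have [bounds adj_b] := pick_end_spec b sep.
by rewrite /left_end /left_witness adj_sym; move: zv; rewrite /is_vertex => zv; split => //; lia.
Qed.

Definition special_witness c := vertex_witness n (special_near n l adj c).
Definition special_end c (b : bool) :=
  let z := special_witness c in if adj z (z - l) == b then z - l else z.

Lemma special_breakP c b : special_break n l adj c ->
  [/\ is_vertex n (special_end c b), special_end c b + l <= n, special_end c b < c + l,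
      c <= special_end c b + 2 * l & adj (special_end c b) (special_end c b + l) = b].
Proof.
case/andP=> _ /vertex_witnessP[_ /andP[/and3P[l_z z_n sep] near]].
rewrite /special_end /special_witness /is_vertex; set z := vertex_witness _ _ in l_z z_n sep near *.
case: eqP => [<- | ne].
  by rewrite subnK ?(ltnW l_z) // (adj_sym (z - l)); split => //; lia.
have adj_b : adj z (z + l) = b.
  by move: sep ne; case: (adj z (z - l)) (adj z (z + l)) b => -[] [].
by split; lia.
Qed.

End Witnesses.

Section Partition.
Variables (n l : nat) (adj : rel nat).
Hypotheses (l_gt0 : 0 < l) (adj_sym : forall u v, adj u v = adj v u).

Definition cuts : seq nat := [seq c <- iota 1 n.+1 | [|| c == 1, c == n.+1 | cut n l adj c]].

Lemma cuts_partition : homog_block_partition n adj l (size cuts).-1 (nth 0 cuts).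
Proof.
have cuts_sorted : sorted ltn cuts.
  by apply: sorted_filter; [apply: ltn_trans | apply: iota_ltn_sorted].
have cuts_gt0 : 0 < size cuts by rewrite /cuts /=.
have cut_range j : j < size cuts -> 1 <= nth 0 cuts j <= n.+1.
  by move=> /(mem_nth 0); rewrite mem_filter mem_iota add1n ltnS => /andP[_].
split; [by rewrite /cuts /= | split; [|split]].
- rewrite nth_last /cuts.
  have -> : iota 1 n.+1 = rcons (iota 1 n) n.+1 by rewrite -cats1 -{1}(addn1 n) iotaD add1n.
  by rewrite filter_rcons eqxx orbT last_rcons.
- move=> j; rewrite ltn_predRL => jm.
  by apply: (sorted_ltn_nth ltn_trans); rewrite // inE ?(ltnW jm).
- move=> j; rewrite ltn_predRL => jm.
  have block_homog x y : x <= y -> nth 0 cuts j <= x -> y < nth 0 cuts j.+1 ->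
      homog n adj l x y.
    move=> xy jx yj; have := cut_range j (ltac:(lia)); have := cut_range j.+1 (ltac:(lia)).
    move=> ? ?; apply: homog_of_no_cut => // [|| c /andP[xc cy]]; try lia.
    have := @filter_iota_gap (fun c => [|| c == 1, c == n.+1 | cut n l adj c]) 1 n.+1 j c.
    rewrite -/cuts => /(_ (ltac:(lia)) (ltac:(lia))).
    by apply: contra => ->; rewrite !orbT.
  move=> x y /andP[jx xj] /andP[jy yj]; have [xy | /ltnW yx] := leqP x y.
    exact: block_homog.
  by move=> z zv zx zy; rewrite (block_homog y x).
Qed.

Lemma size_cuts : size cuts <= 2 + count (cut n l adj) (iota 1 n.+1).
Proof.
have count1 c : count (pred1 c) (iota 1 n.+1) <= 1 by rewrite count_uniq_mem ?iota_uniq ?leq_b1.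
rewrite size_filter.
apply: (leq_trans (count_le_predU (a1 := pred1 1)
                                   (a2 := predU (pred1 n.+1) (cut n l adj)) _ _)) => //.
rewrite -[2]/(1 + 1) -addnA; apply: leq_add => //.
apply: (leq_trans (count_le_predU (a1 := pred1 n.+1) (a2 := cut n l adj) _ _)) => //.
exact: leq_add.
Qed.

End Partition.

Section Counting.
Variables (k l n : nat) (adj : rel nat).
Hypotheses (k_gt0 : 0 < k) (l_gt0 : 0 < l) (adj_sym : forall u v, adj u v = adj v u).

Let M := (2 * k).-1.
Let succM : 2 * k = M.+1. Proof. by rewrite /M prednK // muln_gt0. Qed.

(* Two breaks of equal parity are at least 2 apart, so the endpoints chosen from
   {p, p+1} keep the order of the breaks. *)
Definition parity_breaks (brk : pred nat) (par : bool) :=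
  [seq p <- iota 0 n.+1 | brk p && (odd p == par)].

Lemma mem_parity_breaks brk par p :
  p \in parity_breaks brk par -> brk p /\ odd p = par.
Proof. by rewrite mem_filter => /andP[/andP[? /eqP]]. Qed.

Lemma parity_breaks_gap brk par p q : p \in parity_breaks brk par ->
  q \in parity_breaks brk par -> p < q -> p.+2 <= q.
Proof.
by move=> /mem_parity_breaks[_ op] /mem_parity_breaks[_ oq]; apply: odd_gap; rewrite op oq.
Qed.

Lemma type3_of_right_chain par (f : nat -> nat) :
  (forall t, t <= M.*2 -> f t \in parity_breaks (right_break n l adj) par) ->
  (forall t, t < M.*2 -> f t < f t.+1 /\ right_witness n l adj (f t) <= (f t.+1).+1) ->
  type3 n adj k l.
Proof.
move=> f_s chain; have brk t : t <= M.*2 -> right_break n l adj (f t).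
  by move=> /f_s /mem_parity_breaks[].
apply: (type3_of_pairs (a := fun t => right_end n l adj (f t.*2) (odd t))
                       (b := fun t => right_witness n l adj (f t.*2))) => [|t|t]; first done.
- rewrite succM ltnS => tM.
  have [? /andP[_ ?] _ ? ?] := right_breakP adj_sym (odd t) (brk t.*2 (ltac:(lia))).
  by split.
- rewrite succM ltnS doubleS => tM.
  have [_ w_f] := chain t.*2 (ltac:(lia)).
  have [lt_f _] := chain t.*2.+1 (ltac:(lia)).
  have := parity_breaks_gap (f_s t.*2.+1 (ltac:(lia))) (f_s t.*2.+2 (ltac:(lia))) lt_f.
  have [_ _ /andP[? _] _ _] := right_breakP adj_sym (odd t.+1) (brk t.*2.+2 (ltac:(lia))).
  lia.
Qed.

Lemma type12_of_right_antichain par (f : nat -> nat) :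
  (forall t, t <= M -> f t \in parity_breaks (right_break n l adj) par) ->
  (forall t, t < M -> f t < f t.+1) ->
  (forall t u, t < u <= M -> ~~ (right_witness n l adj (f t) <= (f u).+1)) ->
  monotone_upto (right_witness n l adj \o f) M -> type1 n adj k \/ type2 n adj k.
Proof.
move=> f_s f_lt free mono; have brk t : t <= M -> right_break n l adj (f t).
  by move=> /f_s /mem_parity_breaks[].
pose x t := right_end n l adj (f t) (odd t); pose y t := right_witness n l adj (f t).
have pair t : t <= M ->
    [/\ is_vertex n (x t), is_vertex n (y t), x t < y t & adj (x t) (y t) = odd t].
  move=> tM; have [? ? _ ? ?] := right_breakP adj_sym (odd t) (brk t tM).
  by split => //; rewrite /x /y; lia.
have x_lt t : t < M -> x t < x t.+1.
  move=> tM; have := parity_breaks_gap (f_s t (ltnW tM)) (f_s t.+1 tM) (f_lt t tM).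
  have [_ _ /andP[_ ?] _ _] := right_breakP adj_sym (odd t) (brk t (ltnW tM)).
  have [_ _ /andP[? _] _ _] := right_breakP adj_sym (odd t.+1) (brk t.+1 tM).
  rewrite /x; lia.
have pair_k t : t < 2 * k -> [/\ is_vertex n (x t), is_vertex n (y t) & adj (x t) (y t) = odd t].
  by rewrite succM => /pair[].
case: mono => [up | down | const].
- right; apply: (type2_of_crossing_pairs pair_k) => [t|].
    by rewrite succM ltnS => tM; split; [apply: x_lt | apply: up].
  rewrite succM /=; have := free 0 M (ltac:(lia)).
  have [_ _ /andP[_ ?] _ _] := right_breakP adj_sym (odd M) (brk M (leqnn M)).
  rewrite /x /y; lia.
- right; apply: (type2_of_nested_pairs pair_k) => [t|].
    by rewrite succM ltnS => tM; split; [apply: x_lt | apply: down].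
  by rewrite succM /=; have [] := pair M (leqnn M).
- have y_const t : t <= M -> y t = y 0.
    move=> tM; apply: esym; apply: (eq_steps (g := y)) => // u /andP[_ uM].
    by apply: const; lia.
  left; apply: (type1_of_star (y := y 0) (x := x)); rewrite ?succM.
  + by have [] := pair 0 (leq0n M).
  + by move=> t tM; rewrite -(y_const t tM) adj_sym; have [] := pair t tM.
  + exact: x_lt.
  + by right; rewrite /= -(y_const M) //; have [] := pair M (leqnn M).
Qed.

Lemma type3_of_left_chain par (f : nat -> nat) :
  (forall t, t <= M.*2 -> f t \in parity_breaks (left_break n l adj) par) ->
  (forall t, t < M.*2 -> f t < f t.+1 /\ f t <= left_witness n l adj (f t.+1)) ->
  type3 n adj k l.
Proof.
move=> f_s chain; have brk t : t <= M.*2 -> left_break n l adj (f t).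
  by move=> /f_s /mem_parity_breaks[].
apply: (type3_of_pairs (a := fun t => left_witness n l adj (f t.*2))
                       (b := fun t => left_end n l adj (f t.*2) (odd t))) => [|t|t]; first done.
- rewrite succM ltnS => tM.
  have [? /andP[_ ?] _ ? ?] := left_breakP adj_sym (odd t) (brk t.*2 (ltac:(lia))).
  by split.
- rewrite succM ltnS doubleS => tM.
  have [lt_f _] := chain t.*2 (ltac:(lia)).
  have [_ f_w] := chain t.*2.+1 (ltac:(lia)).
  have := parity_breaks_gap (f_s t.*2 (ltac:(lia))) (f_s t.*2.+1 (ltac:(lia))) lt_f.
  have [_ _ /andP[_ ?] _ _] := left_breakP adj_sym (odd t) (brk t.*2 (ltac:(lia))).
  lia.
Qed.

Lemma type12_of_left_antichain par (f : nat -> nat) :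
  (forall t, t <= M -> f t \in parity_breaks (left_break n l adj) par) ->
  (forall t, t < M -> f t < f t.+1) ->
  (forall t u, t < u <= M -> ~~ (f t <= left_witness n l adj (f u))) ->
  monotone_upto (left_witness n l adj \o f) M -> type1 n adj k \/ type2 n adj k.
Proof.
move=> f_s f_lt free mono; have brk t : t <= M -> left_break n l adj (f t).
  by move=> /f_s /mem_parity_breaks[].
pose w t := left_witness n l adj (f t); pose y t b := left_end n l adj (f t) b.
have pair t b : t <= M ->
    [/\ is_vertex n (w t), is_vertex n (y t b), w t + l <= y t b & adj (w t) (y t b) = b].
  by move=> tM; have [? ? _ ? ?] := left_breakP adj_sym b (brk t tM).
have y_lt t b b' : t < M -> y t b < y t.+1 b'.
  move=> tM; have := parity_breaks_gap (f_s t (ltnW tM)) (f_s t.+1 tM) (f_lt t tM).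
  have [_ _ /andP[_ ?] _ _] := left_breakP adj_sym b (brk t (ltnW tM)).
  have [_ _ /andP[? _] _ _] := left_breakP adj_sym b' (brk t.+1 tM).
  rewrite /y; lia.
case: mono => [up | down | const].
- right; apply: (type2_of_crossing_pairs (a := w) (b := fun t => y t (odd t))).
  + by rewrite succM => t /(pair t (odd t))[].
  + by rewrite succM => t tM; split; [apply: up | apply: y_lt].
  + have [_ _ /andP[? _] _ _] := left_breakP adj_sym false (brk 0 (leq0n M)).
    by have := free 0 M (ltac:(lia)); rewrite succM /= /w /y; lia.
- right; apply: (type2_of_nested_pairs (a := fun t => w (M - t))
                                       (b := fun t => y (M - t) (odd t))).
  + by rewrite succM => t _; have [? ? _ ?] := pair (M - t) (odd t) (leq_subr _ _).
  + rewrite succM => t tM; have -> : M - t = (M - t.+1).+1 by lia.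
    by split; [apply: down | apply: y_lt]; lia.
  + by rewrite succM /= subnn; have [_ _ ? _] := pair 0 (odd M) (leq0n M); lia.
- have w_const t : t <= M -> w t = w 0.
    move=> tM; apply: esym; apply: (eq_steps (g := w)) => // u /andP[_ uM].
    by apply: const; lia.
  left; apply: (type1_of_star (y := w 0) (x := fun t => y t (odd t))); rewrite ?succM.
  + by have [] := pair 0 false (leq0n M).
  + by move=> t tM; rewrite -(w_const t tM); have [] := pair t (odd t) tM.
  + by move=> t tM; apply: y_lt.
  + by left => /=; have [_ _ ? _] := pair 0 false (leq0n M); lia.
Qed.

Hypotheses (no_type1 : ~ type1 n adj k) (no_type2 : ~ type2 n adj k).
Hypothesis no_type3 : ~ type3 n adj k l.

Lemma size_right_parity_breaks par :
  size (parity_breaks (right_break n l adj) par) <= M.*2 * M ^ 3.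
Proof.
apply: (size_pattern_free (D := fun p q => right_witness n l adj p <= q.+1)
                          (c := right_witness n l adj)).
- by rewrite filter_uniq ?iota_uniq.
- by move=> f f_s /(type3_of_right_chain f_s).
- by move=> f f_s f_lt free /(type12_of_right_antichain f_s f_lt free)[].
Qed.

Lemma size_left_parity_breaks par :
  size (parity_breaks (left_break n l adj) par) <= M.*2 * M ^ 3.
Proof.
apply: (size_pattern_free (D := fun p q => p <= left_witness n l adj q)
                          (c := left_witness n l adj)).
- by rewrite filter_uniq ?iota_uniq.
- by move=> f f_s /(type3_of_left_chain f_s).
- by move=> f f_s f_lt free /(type12_of_left_antichain f_s f_lt free)[].
Qed.

Lemma special_breaks_count : count (special_break n l adj) (iota 1 n.+1) <= 4 * M.
Proof.
rewrite -size_filter; set s := filter _ _; rewrite leqNgt; apply/negP => long.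
have s_sorted : sorted ltn s by apply: sorted_filter; [apply: ltn_trans | apply: iota_ltn_sorted].
have s_brk i : i < size s -> special_break n l adj (nth 0 s i).
  by move=> /(mem_nth 0); rewrite mem_filter => /andP[].
have step i : i.+1 < size s -> nth 0 s i + l <= nth 0 s i.+1.
  move=> i_s; have lt_s : nth 0 s i < nth 0 s i.+1.
    by apply: (sorted_ltn_nth ltn_trans) => //; rewrite inE ltnW.
  have /andP[dvd_i _] := s_brk i (ltnW i_s); have /andP[dvd_j _] := s_brk i.+1 i_s.
  by have := dvdn_leq (_ : 0 < _) (dvdn_sub dvd_j dvd_i); rewrite subn_gt0 => /(_ lt_s); lia.
(* The pair of a special cut c lies in (c - 2l, c + 2l), and every fourth cut is
   4l further. *)
pose c t := nth 0 s (4 * t).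
have c_gap t : t < M -> c t + 4 * l <= c t.+1.
  move=> tM; have := step (4 * t) (ltac:(lia)); have := step (4 * t).+1 (ltac:(lia)).
  have := step (4 * t).+2 (ltac:(lia)); have := step (4 * t).+3 (ltac:(lia)).
  by rewrite /c (_ : 4 * t.+1 = (4 * t).+4); lia.
apply: no_type3.
apply: (type3_of_pairs (a := fun t => special_end n l adj (c t) (odd t))
                       (b := fun t => special_end n l adj (c t) (odd t) + l)) => [|t|t]; first done.
- rewrite succM ltnS => tM.
  by have [? ? _ _ ?] := special_breakP adj_sym (odd t) (s_brk (4 * t) (ltac:(lia))).
- rewrite succM ltnS => tM; have := c_gap t tM.
  have [_ _ ? _ _] := special_breakP adj_sym (odd t) (s_brk (4 * t) (ltac:(lia))).
  have [_ _ _ ? _] := special_breakP adj_sym (odd t.+1) (s_brk (4 * t.+1) (ltac:(lia))).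
  rewrite /c; lia.
Qed.

Lemma cut_count : count (cut n l adj) (iota 1 n.+1) <= 4 * (M.*2 * M ^ 3) + 4 * M.
Proof.
have shift (P : pred nat) : count (fun c => P c.-1) (iota 1 n.+1) = count P (iota 0 n.+1).
  by rewrite -[1]/(1 + 0) iotaDl count_map; apply: eq_count.
have by_parity (P : pred nat) : count P (iota 0 n.+1) <=
    size (parity_breaks P false) + size (parity_breaks P true).
  by rewrite !size_filter; apply: count_le_predU => p /= ->; case: odd.
have cut_le : count (cut n l adj) (iota 1 n.+1) <=
    count (right_break n l adj) (iota 0 n.+1) +
    (count (left_break n l adj) (iota 0 n.+1) + count (special_break n l adj) (iota 1 n.+1)).
  rewrite -!shift; apply: (leq_trans (count_le_predU (a1 := fun c => right_break n l adj c.-1)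
    (a2 := predU (fun c => left_break n l adj c.-1) (special_break n l adj)) _ _)).
    by move=> c /and3P[].
  by rewrite leq_add2l count_le_predU.
have := by_parity (right_break n l adj); have := by_parity (left_break n l adj).
have := size_right_parity_breaks false; have := size_right_parity_breaks true.
have := size_left_parity_breaks false; have := size_left_parity_breaks true.
have := special_breaks_count; lia.
Qed.

End Counting.

Theorem lemma3 (k l n : nat) (adj : rel nat) :
  1 <= k -> 1 <= l -> simple_graph adj ->
  ~ type1 n adj k -> ~ type2 n adj k -> ~ type3 n adj k l ->
  exists (m : nat) (b : nat -> nat),
    m <= 256 * k ^ 4 /\ homog_block_partition n adj l m b.
Proof.
move=> k_gt0 l_gt0 [adj_sym _] no1 no2 no3.
exists (size (cuts n l adj)).-1, (nth 0 (cuts n l adj)); split; last exact: cuts_partition.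
have := cut_count k_gt0 l_gt0 adj_sym no1 no2 no3; have := size_cuts n l adj.
set M := (2 * k).-1; have M_lt : M < 2 * k by rewrite ltn_predL muln_gt0.
have M4 : M.*2 * M ^ 3 <= 32 * k ^ 4.
  rewrite -mul2n -mulnA -expnS -[32]/(2 * 2 ^ 4) -mulnA -expnMn leq_mul2l /=.
  by rewrite leq_exp2r // ltnW.
have k4 : k <= k ^ 4 by rewrite -{1}(expn1 k) leq_pexp2l.
lia.
Qed.
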